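(* Let $G$ be a finite $p$-group whose commutator subgroup $D(G)$ equals its Frattini subgroup and is elementary abelian of rank $n\ge2$, with notation $\phi$, $g_1,\dots,g_n$, $\ell_{i,j}$ as below, and assume that $\ell_{i+1,i}$ is a nonzero linear form for every $i\in\{1,\dots,n-1\}$. Then: (1) for every $i\in\{1,\dots,n-1\}$ there exists $\lambda_i\in\mathbb F_p\setminus\{0\}$ with $\ell_{i+1,i}=\lambda_i\ell_{2,1}$; consequently there is an $\mathbb F_p$-basis of $D(G)$ in which every $\phi(y)$ is lower unitriangular with all subdiagonal entries equal to $\ell(y)$ for a single nonzero linear form $\ell:G/D(G)\to\mathbb F_p$; (2) $n\le p$.
   Context: $\phi:G/D(G)\to\mathrm{Aut}(D(G))$ is the conjugation action $\phi(y)(g)=s(y)^{-1}gs(y)$ for any lift $s(y)\in G$ of $y$; $g_1,\dots,g_n$ is an $\mathbb F_p$-basis of $D(G)$ (written additively) in which each $\phi(y)$ is lower unitriangular: $\phi(y)(g_j)=g_j+\sum_{i>j}\ell_{i,j}(y)g_i$ with $\ell_{i,j}(y)\in\mathbb F_p$. Each $\ell_{i+1,i}$ is a homomorphism $G/D(G)\to\mathbb F_p$. *)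

From HB Require Import structures.
From mathcomp Require Import all_boot all_order all_algebra all_fingroup all_solvable.
Set Implicit Arguments. Unset Strict Implicit. Unset Printing Implicit Defensive.
Import GRing.Theory.

(* g_0, ..., g_(n-1) (0-based indexing) is an F_p-basis of the elementary
   abelian p-group E, written multiplicatively: every x in E is uniquely
   a product  prod_i g_i ^ a_i  with coefficients a_i in F_p. *)
Definition Fp_basis (gT : finGroupType) (p n : nat) (E : {set gT})
  (g : nat -> gT) : Prop :=
  [/\ (forall i, i < n -> g i \in E),
      (forall x, x \in E ->
         exists a : nat -> 'F_p, x = (\prod_(i < n) g i ^+ a i)%g)
    & (forall a b : nat -> 'F_p,
         (\prod_(i < n) g i ^+ a i)%g = (\prod_(i < n) g i ^+ b i)%g ->
         forall i, i < n -> a i = b i)].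

(* In the basis g, conjugation by every y in G is lower unitriangular with
   entries l i j y (i > j):  g_j ^ y = g_j * prod_(j.+1 <= i < n) g_i ^ (l i j y).
   (x ^ y = y^-1 x y in MathComp, matching phi(y)(g) = s(y)^-1 g s(y).) *)
Definition lower_unitri (gT : finGroupType) (p n : nat) (G : {set gT})
  (g : nat -> gT) (l : nat -> nat -> gT -> 'F_p) : Prop :=
  forall y j, y \in G -> j < n ->
    (g j ^ y = g j * \prod_(j.+1 <= i < n) g i ^+ l i j y)%g.

Definition linear_form_mod (gT : finGroupType) (p : nat) (G : {set gT})
  (f : gT -> 'F_p) : Prop :=
  (forall x y, x \in G -> y \in G -> f (x * y)%g = (f x + f y)%R) /\
  (forall x, x \in (G^`(1))%g -> f x = 0%R).

Arguments Fp_basis {gT} p n E g.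
Arguments lower_unitri {gT} p n G g l.
Arguments linear_form_mod {gT} p G f.

From HB Require Import structures.
From mathcomp Require Import all_boot all_order all_algebra all_fingroup all_solvable zify.
Import GRing.Theory.
Local Open Scope group_scope.
Set Implicit Arguments. Unset Strict Implicit. Unset Printing Implicit Defensive.

(* Proof of Proposition 5.4.
   Write the rank of D = G^`(1) as n.+1 and let N(y) be the strictly lower
   triangular matrix of the entries l i j y, so that 1 + N(y) is the matrix of
   conjugation by y in the basis g.  Since conjugation is an action,
   1 + N(x y) = (1 + N(y)) (1 + N(x)); since D is abelian, N vanishes on D,
   and since every commutator lies in D, the matrices N(x), N(y) commute.
   Comparing the (i+2, i) entries of N(x) N(y) = N(y) N(x) gives
   l_(i+2,i+1)(x) l_(i+1,i)(y) = l_(i+2,i+1)(y) l_(i+1,i)(x), and a chain of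
   such exchange relations forces every subdiagonal form to be a nonzero
   multiple of l_(1,0) (part 1).  Comparing (i+1, i) entries of
   N(x y) = N(y) + N(x) + N(y) N(x) shows that each subdiagonal entry is a
   linear form.  Rescaling the basis vectors by prefix products of the
   proportionality constants makes all subdiagonal entries equal to l_(1,0).
   Finally, for x0 with l_(1,0)(x0) != 0 we have x0^p in Phi(G) = D, so
   (1 + N(x0))^p = 1 + N(x0)^p = 1 in characteristic p, whereas a strictly
   lower triangular matrix with nonzero subdiagonal has N^k != 0 for k <= n;
   hence n.+1 <= p (part 2).
   The file first develops F_p-coordinates in an elementary abelian p-group
   (including rescaling of a basis), then strictly lower triangular matrices,
   then the matrices N(y) and their properties, then the exchange-chain
   argument; the proposition is assembled at the end. *)

Section FpExponents.

Variables (gT : finGroupType) (p : nat) (x : gT).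
Hypotheses (p_pr : prime p) (xp1 : x ^+ p = 1).

Lemma val_FpD (a b : 'F_p) : nat_of_ord (a + b)%R = (a + b) %% p.
Proof. by rewrite -{1}(natr_Zp a) -{1}(natr_Zp b) -natrD val_Fp_nat. Qed.

Lemma val_FpM (a b : 'F_p) : nat_of_ord (a * b)%R = (a * b) %% p.
Proof. by rewrite -{1}(natr_Zp a) -{1}(natr_Zp b) -natrM val_Fp_nat. Qed.

Lemma expFpD (a b : 'F_p) : x ^+ (a + b)%R = x ^+ a * x ^+ b.
Proof. by rewrite val_FpD expg_mod // expgnDr. Qed.

Lemma expFpM (a b : 'F_p) : x ^+ (a * b)%R = (x ^+ a) ^+ b.
Proof. by rewrite val_FpM expg_mod // expgnA. Qed.

End FpExponents.

Lemma val_Fp1 (p : nat) : prime p -> nat_of_ord (1%R : 'F_p) = 1%N.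
Proof.
by move=> p_pr; rewrite -[1%R]/(1%:R : 'F_p)%R val_Fp_nat // modn_small // prime_gt1.
Qed.

Definition Fp_comb (gT : finGroupType) (p n : nat) (e : nat -> gT)
  (a : nat -> 'F_p) : gT := \prod_(i < n) e i ^+ a i.

Lemma eq_Fp_comb (gT : finGroupType) (p n : nat) (e : nat -> gT)
  (a b : nat -> 'F_p) :
  (forall i, i < n -> a i = b i) -> Fp_comb n e a = Fp_comb n e b.
Proof. by move=> eq_ab; apply: eq_bigr => i _; rewrite eq_ab. Qed.

Lemma Fp_comb0 (gT : finGroupType) (p n : nat) (e : nat -> gT) :
  Fp_comb n e (fun _ => 0%R : 'F_p) = 1.
Proof. by apply: big1 => i _; rewrite expg0. Qed.

Definition unitri_col (p j : nat) (w : nat -> 'F_p) : nat -> 'F_p :=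
  fun i => if i == j then 1%R else if j < i then w i else 0%R.

Lemma Fp_comb_unitri (gT : finGroupType) (p n j : nat) (e : nat -> gT)
  (w : nat -> 'F_p) : prime p -> j < n ->
  e j * \prod_(j.+1 <= i < n) e i ^+ w i = Fp_comb n e (unitri_col j w).
Proof.
move=> p_pr jn; rewrite /Fp_comb /unitri_col -(big_mkord xpredT (fun i =>
  e i ^+ (if i == j then 1%R else if j < i then w i else 0%R))).
rewrite (big_cat_nat (leq0n j) (ltnW jn)) /= [X in _ = _ * X]big_ltn // eqxx.
rewrite [X in _ = X * _]big1_seq ?mul1g ?val_Fp1 ?expg1 //; last first.
  move=> i /andP[_]; rewrite mem_index_iota => /andP[_ ij].
  by rewrite ltn_eqF // ltnNge ltnW.
by congr (_ * _); apply: eq_big_nat => i /andP[ji _]; rewrite gtn_eqF // ji.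
Qed.

Section Combinations.

Variables (gT : finGroupType) (D : {group gT}) (p : nat) (e : nat -> gT).
Hypotheses (p_pr : prime p) (abD : abelian D)
  (expD : forall x, x \in D -> x ^+ p = 1).

Lemma Fp_comb_in n (a : nat -> 'F_p) :
  (forall i, i < n -> e i \in D) -> Fp_comb n e a \in D.
Proof. by move=> eD; apply: group_prod => i _; rewrite groupX // eD. Qed.

Lemma Fp_combM n (a b : nat -> 'F_p) : (forall i, i < n -> e i \in D) ->
  Fp_comb n e a * Fp_comb n e b = Fp_comb n e (fun i => a i + b i)%R.
Proof.
elim: n => [|n IH] eD; first by rewrite /Fp_comb !big_ord0 mulg1.
have eD' i : i < n -> e i \in D by move=> lt_in; rewrite eD // ltnW.
have := IH eD'; rewrite /Fp_comb !big_ord_recr /= => <-.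
rewrite expFpD ?expD ?eD // -!mulgA; congr (_ * _); rewrite !mulgA; congr (_ * _).
by apply/commute_sym/(centsP abD); rewrite ?groupX ?Fp_comb_in ?eD.
Qed.

Lemma Fp_combX n (a : nat -> 'F_p) (k : 'F_p) : (forall i, i < n -> e i \in D) ->
  Fp_comb n e a ^+ k = Fp_comb n e (fun i => a i * k)%R.
Proof.
elim: n => [|n IH] eD; first by rewrite /Fp_comb !big_ord0 expg1n.
have eD' i : i < n -> e i \in D by move=> lt_in; rewrite eD // ltnW.
have := IH eD'; rewrite /Fp_comb !big_ord_recr /= => <-.
by rewrite expFpM ?expD ?eD // expgMn //; apply/(centsP abD); rewrite ?groupX ?Fp_comb_in ?eD.
Qed.

Lemma Fp_comb_prod n m (F : nat -> nat -> 'F_p) :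
  (forall i, i < n -> e i \in D) ->
  \prod_(j < m) Fp_comb n e (F j) = Fp_comb n e (fun i => \sum_(j < m) F j i)%R.
Proof.
move=> eD; elim: m => [|m IH].
  by rewrite big_ord0 -(@Fp_comb0 _ p n e); apply: eq_Fp_comb => i _; rewrite big_ord0.
rewrite big_ord_recr /= IH Fp_combM //.
by apply: eq_Fp_comb => i _; rewrite big_ord_recr.
Qed.

Variables (G : {group gT}) (n : nat) (l : nat -> nat -> gT -> 'F_p)
  (c : nat -> 'F_p).
Hypotheses (e_basis : Fp_basis p n D e) (c_neq0 : forall i, i < n -> c i != 0%R).

Let rescale_comb (a : nat -> 'F_p) :
  Fp_comb n (fun i => e i ^+ c i) a = Fp_comb n e (fun i => c i * a i)%R.
Proof.
have [eD _ _] := e_basis.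
by apply: eq_bigr => i _; rewrite -expFpM ?expD ?eD.
Qed.

Lemma rescale_Fp_basis : Fp_basis p n D (fun i => e i ^+ c i).
Proof.
have [eD e_span e_free] := e_basis; split.
- by move=> i lt_in; rewrite groupX ?eD.
- move=> x /e_span[a ->]; exists (fun i => a i / c i)%R.
  change (Fp_comb n e a = Fp_comb n (fun i => e i ^+ c i) (fun i => a i / c i)%R).
  rewrite rescale_comb; apply: eq_Fp_comb => i lt_in.
  by rewrite mulrCA mulfV ?c_neq0 ?mulr1.
- move=> a b eq_ab i lt_in; apply: (mulfI (c_neq0 lt_in)).
  apply: (e_free (fun i => c i * a i)%R (fun i => c i * b i)%R) lt_in.
  change (Fp_comb n e (fun i => c i * a i)%R = Fp_comb n e (fun i => c i * b i)%R).
  by rewrite -!rescale_comb.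
Qed.

Lemma rescale_lower_unitri : lower_unitri p n G e l ->
  lower_unitri p n G (fun i => e i ^+ c i) (fun i j y => c j * l i j y / c i)%R.
Proof.
have [eD _ _] := e_basis; move=> e_unitri y j yG lt_jn.
rewrite (Fp_comb_unitri (fun i => e i ^+ c i) (fun i => c j * l i j y / c i)%R) //.
rewrite rescale_comb conjXg e_unitri // Fp_comb_unitri //.
rewrite Fp_combX //; apply: eq_Fp_comb => i lt_in; rewrite /unitri_col.
case: eqP => [->|_]; first by rewrite mul1r mulr1.
case: ltnP => _; last by rewrite mul0r mulr0.
by rewrite mulrCA mulfV ?c_neq0 // mulr1 mulrC.
Qed.

End Combinations.

Definition strictly_lower (R : pzRingType) m (A : 'M[R]_m) :=
  forall a b : 'I_m, (a <= b)%N -> A a b = 0%R.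

Section StrictlyLower.

Variables (R : pzRingType) (m : nat).
Implicit Types A B : 'M[R]_m.+1.

Lemma strictly_lower_mul0 A B (i j : 'I_m.+1) :
  strictly_lower A -> strictly_lower B -> (i <= j.+1)%N -> (A * B)%R i j = 0%R.
Proof.
move=> lA lB le_ij; rewrite -mulmxE mxE big1 // => k _.
case: (leqP i k) => [le_ik|lt_ki]; first by rewrite lA // mul0r.
case: (leqP k j) => [le_kj|lt_jk]; first by rewrite lB // mulr0.
by move: (leq_trans lt_ki le_ij); rewrite ltnS leqNgt lt_jk.
Qed.

Lemma strictly_lower_mul2 A B (i j k : 'I_m.+1) :
  strictly_lower A -> strictly_lower B -> i = j.+2 :> nat -> k = j.+1 :> nat ->
  (A * B)%R i j = (A i k * B k j)%R.
Proof.
move=> lA lB Ei Ek; rewrite -mulmxE mxE (bigD1 k) //= big1 ?addr0 // => a ne_ak.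
case: (leqP i a) => [le_ia|lt_ai]; first by rewrite lA // mul0r.
case: (leqP a j) => [le_aj|lt_ja]; first by rewrite lB // mulr0.
suff Eak : a = k by rewrite Eak eqxx in ne_ak.
by apply/ord_inj/eqP; rewrite Ek eqn_leq lt_ja andbT -ltnS -Ei.
Qed.

End StrictlyLower.

Lemma strictly_lower_pow (R : idomainType) m (A : 'M[R]_m.+1) :
  strictly_lower A -> (forall a b : 'I_m.+1, b.+1 = a :> nat -> A a b != 0%R) ->
  forall k, (forall i : 'I_m.+1, (i < k)%N -> (A ^+ k)%R i ord0 = 0%R) /\
            (forall i : 'I_m.+1, i = k :> nat -> (A ^+ k)%R i ord0 != 0%R).
Proof.
move=> lA subA; elim=> [|k [IH0 IHk]].
  split=> // i /= i0; rewrite expr0 mxE.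
  have -> : i = ord0 by apply: val_inj.
  by rewrite eqxx oner_neq0.
split=> i lt_ik; rewrite exprS -mulmxE mxE.
  rewrite big1 // => a _.
  case: (leqP i a) => [le_ia|lt_ai]; first by rewrite lA // mul0r.
  by rewrite IH0 ?mulr0 // (leq_trans lt_ai).
have lt_km : (k < m.+1)%N by rewrite -lt_ik ltnW.
rewrite (bigD1 (inord k)) //= big1 ?addr0.
  by rewrite mulf_neq0 ?IHk ?subA ?inordK.
move=> a ne_ak.
case: (leqP i a) => [le_ia|lt_ai]; first by rewrite lA // mul0r.
case: (ltnP a k) => [lt_ak|le_ka]; first by rewrite IH0 // mulr0.
suff Eak : a = inord k by rewrite Eak eqxx in ne_ak.
by apply/ord_inj/eqP; rewrite inordK // eqn_leq le_ka andbT -ltnS -lt_ik.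
Qed.

Lemma strictly_lower_nilpotent_index (R : idomainType) m (A : 'M[R]_m.+1) k :
  strictly_lower A -> (forall a b : 'I_m.+1, b.+1 = a :> nat -> A a b != 0%R) ->
  (A ^+ k = 0)%R -> (m < k)%N.
Proof.
move=> lA subA Ak0; rewrite ltnNge; apply/negP => le_km.
have [_ /(_ (inord k))] := strictly_lower_pow lA subA k.
by rewrite inordK // Ak0 mxE eqxx => /(_ erefl).
Qed.

Lemma pchar_Fp_mx (p m : nat) : prime p -> p \in [pchar 'M['F_p]_m.+1]%R.
Proof.
move=> p_pr; rewrite inE p_pr /=; apply/eqP/matrixP => i j.
by rewrite mulmxnE -mulr_natr pchar_Fp_0 // mulr0 mxE.
Qed.

Lemma Fp_mx_exp_add1 (p m : nat) (A : 'M['F_p]_m.+1) :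
  prime p -> ((1 + A) ^+ p = 1 + A ^+ p)%R.
Proof.
move=> p_pr; have chp := pchar_Fp_mx m p_pr.
rewrite -!(pFrobenius_autE chp) pFrobenius_autD_comm; last first.
  by rewrite /GRing.comm mul1r mulr1.
by rewrite pFrobenius_autE expr1n.
Qed.

Section ConjugationMatrices.

Variables (gT : finGroupType) (G : {group gT}) (p n : nat) (g : nat -> gT)
  (l : nat -> nat -> gT -> 'F_p).
Hypotheses (p_pr : prime p) (abD : abelian G^`(1))
  (expD : forall x, x \in G^`(1) -> x ^+ p = 1)
  (g_basis : Fp_basis p n.+1 G^`(1) g) (g_unitri : lower_unitri p n.+1 G g l).

Let gD i : i < n.+1 -> g i \in G^`(1).
Proof. by case: g_basis => gD _ _; apply: gD. Qed.

Definition conj_col j y : nat -> 'F_p := unitri_col j (fun i => l i j y).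

Lemma conj_coords y j :
  y \in G -> j < n.+1 -> g j ^ y = Fp_comb n.+1 g (conj_col j y).
Proof. by move=> yG lt_jn; rewrite g_unitri // Fp_comb_unitri. Qed.

(* Since conjugation is an action, coordinates compose like matrices. *)
Lemma conj_colM x y j k : x \in G -> y \in G -> j < n.+1 -> k < n.+1 ->
  conj_col j (x * y) k = (\sum_(i < n.+1) conj_col i y k * conj_col j x i)%R.
Proof.
move=> xG yG lt_jn lt_kn; have [_ _ g_free] := g_basis.
apply: (g_free (conj_col j (x * y))
  (fun k => \sum_(i < n.+1) conj_col i y k * conj_col j x i)%R _ k lt_kn).
change (Fp_comb n.+1 g (conj_col j (x * y)) = Fp_comb n.+1 g
  (fun k => \sum_(i < n.+1) conj_col i y k * conj_col j x i)%R).
rewrite -conj_coords ?groupM // conjgM conj_coords // {1}/Fp_comb conjg_prod.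
rewrite -(Fp_comb_prod p_pr abD expD n.+1 (fun i k =>
  (conj_col i y k * conj_col j x i)%R)) //.
by apply: eq_bigr => i _; rewrite conjXg conj_coords // (Fp_combX p_pr abD expD).
Qed.

(* N(y): the strictly lower part of the matrix of conjugation by y. *)
Definition conj_nil y : 'M['F_p]_n.+1 :=
  (\matrix_(k, j) if (j < k)%N then l k j y else 0)%R.

Lemma conj_nil_lower y : strictly_lower (conj_nil y).
Proof. by move=> a b le_ab; rewrite mxE ltnNge le_ab. Qed.

Lemma conj_nil_entry y a b : b < a -> a < n.+1 ->
  conj_nil y (inord a) (inord b) = l a b y.
Proof. by move=> lt_ba lt_an; rewrite mxE !inordK ?lt_ba // (ltn_trans lt_ba). Qed.

Lemma conj_col_mx y (k j : 'I_n.+1) : conj_col j y k = (1%:M + conj_nil y)%R k j.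
Proof.
rewrite !mxE /conj_col /unitri_col; case: eqP => [/ord_inj->|ne_kj].
  by rewrite eqxx ltnn addr0.
have /negbTE-> : k != j by apply/eqP => Ekj; case: ne_kj; rewrite Ekj.
by rewrite add0r.
Qed.

Lemma conj_mxM x y : x \in G -> y \in G ->
  (1%:M + conj_nil (x * y) = (1%:M + conj_nil y) * (1%:M + conj_nil x))%R.
Proof.
move=> xG yG; apply/matrixP => k j; rewrite -conj_col_mx conj_colM //.
by rewrite -mulmxE mxE; apply: eq_bigr => i _; rewrite -!conj_col_mx mulrC.
Qed.

Lemma conj_nilM x y : x \in G -> y \in G ->
  conj_nil (x * y) = (conj_nil y + conj_nil x + conj_nil y * conj_nil x)%R.
Proof.
move=> xG yG; apply: (@addrI _ 1%:M%R); rewrite conj_mxM //.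
rewrite mulrDl !mulrDr !mul1r mulr1 -!addrA; congr (_ + _)%R.
by rewrite addrCA.
Qed.

(* G^`(1) is abelian, so it acts trivially on itself. *)
Lemma conj_nil_der d : d \in G^`(1) -> conj_nil d = 0%R.
Proof.
move=> dD; have [_ _ g_free] := g_basis.
apply/matrixP => k j; rewrite !mxE; case: ifP => // lt_jk.
have dG : d \in G by apply: subsetP (der_sub 1 G) d dD.
have : Fp_comb n.+1 g (conj_col j d) = Fp_comb n.+1 g (unitri_col j (fun _ => 0%R : 'F_p)).
  rewrite -conj_coords // -Fp_comb_unitri // big1 ?mulg1 => [|i _]; last first.
    by rewrite expg0.
  by rewrite conjgE (centsP abD _ (gD (ltn_ord j)) _ dD) mulKg.
by move/g_free/(_ k (ltn_ord k)); rewrite /conj_col /unitri_col gtn_eqF // lt_jk.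
Qed.

(* Commutators lie in G^`(1), so the matrices N(x), N(y) commute. *)
Lemma conj_nil_comm x y : x \in G -> y \in G ->
  (conj_nil x * conj_nil y = conj_nil y * conj_nil x)%R.
Proof.
move=> xG yG; have cD : [~ x, y] \in G^`(1) by rewrite derg1 mem_commg.
have cG : [~ x, y] \in G by apply: subsetP (der_sub 1 G) _ cD.
have : conj_nil (x * y) = conj_nil (y * x).
  by rewrite commgC (conj_nilM (groupM yG xG) cG) conj_nil_der // mul0r !addr0 add0r.
rewrite !conj_nilM // => Exy; apply: (@addrI _ (conj_nil x + conj_nil y)%R).
by rewrite -Exy [(conj_nil y + _)%R]addrC.
Qed.

(* The (i+2, i) entries of N(x) N(y) = N(y) N(x). *)
Lemma subdiag_exchange i x y : i.+1 < n -> x \in G -> y \in G ->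
  (l i.+2 i.+1 x * l i.+1 i y = l i.+2 i.+1 y * l i.+1 i x)%R.
Proof.
move=> lt_in xG yG; set a : 'I_n.+1 := inord i.+2; set b : 'I_n.+1 := inord i.
set c : 'I_n.+1 := inord i.+1.
have mul2 u v : (conj_nil u * conj_nil v)%R a b = (conj_nil u a c * conj_nil v c b)%R.
  by apply: strictly_lower_mul2; rewrite ?inordK //; try exact: conj_nil_lower; lia.
have := congr1 (fun A : 'M_n.+1 => A a b) (conj_nil_comm xG yG).
by rewrite /= !mul2 !conj_nil_entry // ltnW.
Qed.

(* The (i+1, i) entries of N(x y) = N(y) + N(x) + N(y) N(x): every
   subdiagonal entry is a linear form on G / G^`(1). *)
Lemma subdiag_linear i : i < n -> linear_form_mod p G (l i.+1 i).
Proof.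
move=> lt_in; split=> [x y xG yG|d dD].
  have sub0 : (conj_nil y * conj_nil x)%R (inord i.+1) (inord i) = 0%R.
    by apply: strictly_lower_mul0; rewrite ?inordK //; try exact: conj_nil_lower; lia.
  have := congr1 (fun A : 'M_n.+1 => A (inord i.+1) (inord i)) (conj_nilM xG yG).
  by rewrite /= conj_nil_entry // mxE sub0 addr0 mxE !conj_nil_entry // addrC.
have := congr1 (fun A : 'M_n.+1 => A (inord i.+1) (inord i)) (conj_nil_der dD).
by rewrite /= conj_nil_entry // mxE.
Qed.

(* 1 + N is a representation, so it turns powers into matrix powers. *)
Lemma conj_nil_exp x k : x \in G ->
  (1%:M + conj_nil (x ^+ k) = (1%:M + conj_nil x) ^+ k)%R.
Proof.
move=> xG; elim: k => [|k IH]; first by rewrite expg0 conj_nil_der ?group1 ?addr0.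
by rewrite expgSr conj_mxM ?groupX // IH exprS.
Qed.

(* If x ^+ p acts trivially then (1 + N(x))^p = 1, hence N(x)^p = 0 in
   characteristic p. *)
Lemma conj_nil_nilpotent x : x \in G -> x ^+ p \in G^`(1) ->
  (conj_nil x ^+ p = 0)%R.
Proof.
move=> xG xpD; apply: (@addrI _ 1%R); rewrite addr0.
by rewrite -Fp_mx_exp_add1 // -conj_nil_exp // conj_nil_der // addr0.
Qed.

Lemma rank_le_char x : x \in G -> x ^+ p \in G^`(1) ->
  (forall i, i < n -> l i.+1 i x != 0%R) -> n.+1 <= p.
Proof.
move=> xG xpD subdiag_nz.
apply: (strictly_lower_nilpotent_index (conj_nil_lower x)) => [a b Eab|].
  have lt_bn : b < n by rewrite -ltnS Eab.
  by rewrite mxE -Eab ltnSn subdiag_nz.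
exact: conj_nil_nilpotent.
Qed.

End ConjugationMatrices.

Lemma exchange_chain_proportional (T : finType) (F : fieldType) (A : {set T})
    (a : nat -> T -> F) (n : nat) (x0 : T) :
  x0 \in A -> a 0%N x0 != 0%R ->
  (forall i, i < n -> exists2 y, y \in A & a i y != 0%R) ->
  (forall i x y, i.+1 < n -> x \in A -> y \in A ->
     (a i.+1 x * a i y = a i.+1 y * a i x)%R) ->
  forall i, i < n ->
    a i x0 != 0%R /\ forall y, y \in A -> a i y = (a i x0 / a 0%N x0 * a 0%N y)%R.
Proof.
move=> x0A a0x0 a_nz exch; elim=> [|i IH] lt_in.
  by split=> // y _; rewrite mulfV // mul1r.
have [aix0 prop_i] := IH (ltnW lt_in).
have exch_x0 y : y \in A -> (a i.+1 y * a i x0 = a i.+1 x0 * a i y)%R.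
  by move=> yA; apply: exch.
split.
  have [y yA ay] := a_nz i.+1 lt_in; apply/eqP => ax0.
  by move/eqP: (exch_x0 y yA); rewrite ax0 mul0r mulf_eq0 (negPf ay) (negPf aix0).
move=> y yA; apply: (mulIf aix0); rewrite exch_x0 // prop_i //.
by rewrite -!mulrA; congr (_ * _)%R; rewrite [LHS]mulrC -mulrA.
Qed.

Lemma expp_in_Phi (gT : finGroupType) (G : {group gT}) (p : nat) (x : gT) :
  p.-group G -> x \in G -> x ^+ p \in 'Phi(G).
Proof.
move=> pG xG; rewrite (Phi_joing pG); apply: subsetP (joing_subr _ _) _ _.
by have := Mho_p_elt 1 xG (mem_p_elt pG xG); rewrite expn1.
Qed.

Theorem proposition5p4 (gT : finGroupType) (G : {group gT}) (p n : nat)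
  (g : nat -> gT) (l : nat -> nat -> gT -> 'F_p) :
  prime p -> p.-group G ->
  G^`(1) = 'Phi(G) ->
  p.-abelem G^`(1) -> logn p #|G^`(1)| = n -> (2 <= n)%N ->
  Fp_basis p n G^`(1) g ->
  lower_unitri p n G g l ->
  (forall i, (i.+1 < n)%N -> exists2 y, y \in G & l i.+1 i y != 0%R) ->
  ((forall i, (i.+1 < n)%N ->
      exists lam : 'F_p, lam != 0%R /\
        forall y, y \in G -> l i.+1 i y = (lam * l 1%N 0%N y)%R)
   /\
   (exists (h : nat -> gT) (m : nat -> nat -> gT -> 'F_p) (f : gT -> 'F_p),
      [/\ Fp_basis p n G^`(1) h,
          lower_unitri p n G h m,
          (forall i y, (i.+1 < n)%N -> y \in G -> m i.+1 i y = f y),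
          linear_form_mod p G f
        & exists2 y, y \in G & f y != 0%R]))
  /\ (n <= p)%N.
Proof.
move=> p_pr pG derPhi abelD _ n_ge2.
case: n n_ge2 => // n n_gt0 g_basis g_unitri subdiag_nz.
have /(abelemP p_pr) [abD expD] := abelD.
pose f := l 1%N 0%N; have [x0 x0G fx0] := subdiag_nz 0%N n_gt0.
pose lam i := (l i.+1 i x0 / f x0)%R.
have chain := exchange_chain_proportional x0G fx0 subdiag_nz
  (subdiag_exchange p_pr abD expD g_basis g_unitri).
have lam_neq0 i : i < n -> lam i != 0%R.
  by move=> lt_in; rewrite mulf_neq0 ?invr_neq0 //; case: (chain i lt_in).
have n_le_p : n.+1 <= p.
  apply: (rank_le_char p_pr abD expD g_basis g_unitri x0G).
    by rewrite derPhi expp_in_Phi.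
  by move=> i lt_in; case: (chain i lt_in).
pose c k := (\prod_(t < k) lam t)%R.
have c_neq0 k : k < n.+1 -> c k != 0%R.
  by move=> le_kn; apply/prodf_neq0 => t _; rewrite lam_neq0 // (leq_trans (ltn_ord t)).
split=> //; split=> [i lt_in|].
  by exists (lam i); split; [exact: lam_neq0 | case: (chain i lt_in)].
exists (fun i => g i ^+ c i), (fun i j y => c j * l i j y / c i)%R, f; split.
- exact: (rescale_Fp_basis p_pr expD g_basis c_neq0).
- exact: (rescale_lower_unitri p_pr abD expD g_basis c_neq0).
- move=> i y lt_in yG; rewrite [c i.+1]big_ord_recr (chain i lt_in).2 //= -/(lam i).
  by rewrite -/(c i) mulrA mulrAC mulfV ?mul1r // mulf_neq0 ?lam_neq0 ?c_neq0 // ltnW.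
- exact: (subdiag_linear p_pr abD expD g_basis g_unitri).
- by exists x0.
Qed.
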